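(* In the setting below, the sequence $n\mapsto f(\hat x_n)$ is stationary, i.e. constant from some index on.
   Context: Let $x_1,\dots,x_N\in\mathbb{R}^q$ and let $d:\mathbb{R}^q\times\mathbb{R}^q\to\mathbb{R}_{\ge0}$ be a function such that for every $J\subseteq\{1,\dots,N\}$, $x\mapsto\sum_{i\in J}d(x,x_i)$ attains its minimum. Let $\mu$ be a choice function with $\mu(J)\in\operatorname{argmin}_x\sum_{i\in J}d(x,x_i)$ for each $J$. Let $\hat x_0\in\mathbb{R}^q$ and define $C_n=\{i: d(\hat x_n,x_i)<1\}$, $\hat x_{n+1}=\mu(C_n)$. Let $f(x)=\sum_{i=1}^N\max(1-d(x,x_i),0)$. *)

From Stdlib Require Import Reals Lra Lia.
From Stdlib Require Fin.
Open Scope R_scope.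

Definition Rq (q : nat) : Type := Fin.t q -> R.

(* Data points are indexed by 0..N-1 (paper: 1..N).  A subset J of the
   index set is a boolean predicate on indices; only its values on
   0..N-1 matter. *)

Fixpoint sumJ (N : nat) (J : nat -> bool) (g : nat -> R) : R :=
  match N with
  | O => 0
  | S n => sumJ n J g + (if J n then g n else 0)
  end.

Fixpoint sumN (N : nat) (g : nat -> R) : R :=
  match N with
  | O => 0
  | S n => sumN n g + g n
  end.

Definition is_argmin {q : nat} (N : nat) (d : Rq q -> Rq q -> R)
  (xs : nat -> Rq q) (J : nat -> bool) (y : Rq q) : Prop :=
  forall x : Rq q, sumJ N J (fun i => d y (xs i)) <= sumJ N J (fun i => d x (xs i)).

Definition Cset {q : nat} (d : Rq q -> Rq q -> R) (xs : nat -> Rq q) (x : Rq q)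
  : nat -> bool :=
  fun i => if Rlt_dec (d x (xs i)) 1 then true else false.

Fixpoint xhat {q : nat} (d : Rq q -> Rq q -> R) (xs : nat -> Rq q)
  (mu : (nat -> bool) -> Rq q) (x0 : Rq q) (n : nat) : Rq q :=
  match n with
  | O => x0
  | S m => mu (Cset d xs (xhat d xs mu x0 m))
  end.

Definition fobj {q : nat} (N : nat) (d : Rq q -> Rq q -> R) (xs : nat -> Rq q)
  (x : Rq q) : R :=
  sumN N (fun i => Rmax (1 - d x (xs i)) 0).

(** The quantity [best J := max_x sum_{i in J} (1 - d(x, x_i))], attained at
    [mu J], is squeezed along the iteration:
    [f(x_n) <= best(C_n) <= f(x_{n+1})], because [f(x)] is exactly the
    objective of [C(x)] evaluated at [x], while dropping the cut-off
    [max(., 0)] only lowers [f].  Hence both [f(x_n)] and [best(C_n)] are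
    nondecreasing.  Since [best J] only depends on the trace of [J] on the
    [N] data indices, it takes finitely many values, so [best(C_n)] and with
    it [f(x_n)] are eventually constant. *)

From Stdlib Require Import Reals Lra Lia List Classical.
Import ListNotations.
Open Scope R_scope.

Definition stationary (a : nat -> R) : Prop :=
  exists n0 : nat, forall n : nat, (n0 <= n)%nat -> a n = a n0.

Lemma nondecreasing_le (g : nat -> R) :
  (forall n, g n <= g (S n)) -> forall m n, (m <= n)%nat -> g m <= g n.
Proof.
  intros Hg m n Hmn; induction Hmn as [|n _ IH]; [lra|].
  specialize (Hg n); lra.
Qed.

Lemma nondecreasing_finite_range_stationary (L : list R) (g : nat -> R) :
  (forall n, g n <= g (S n)) -> (forall n, In (g n) L) -> stationary g.
Proof.
  revert g; induction L as [|a L IH]; intros g Hg Hin; [destruct (Hin O)|].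
  pose proof (nondecreasing_le g Hg) as Hmono.
  destruct (classic (exists n, a < g n)) as [[n1 Hn1]|Hle].
  - (* from [n1] on, [g] avoids [a] and the tail ranges in [L] *)
    destruct (IH (fun k => g (n1 + k)%nat)) as [n0 Hn0].
    + intro k; rewrite Nat.add_succ_r; apply Hg.
    + intro k; destruct (Hin (n1 + k)%nat) as [E|E]; auto.
      pose proof (Hmono n1 (n1 + k)%nat ltac:(lia)); lra.
    + exists (n1 + n0)%nat; intros n Hn.
      replace n with (n1 + (n - n1))%nat by lia; apply Hn0; lia.
  - destruct (classic (exists n, g n = a)) as [[n1 Hn1]|Hneq].
    + exists n1; intros n Hn.
      assert (~ a < g n) by (intro; apply Hle; eauto).
      pose proof (Hmono n1 n Hn); lra.
    + apply IH; auto.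
      intro n; destruct (Hin n) as [E|E]; auto.
      exfalso; apply Hneq; eauto.
Qed.

Lemma interleaved_finite_range_stationary (L : list R) (a g : nat -> R) :
  (forall n, a n <= g n) -> (forall n, g n <= a (S n)) ->
  (forall n, In (g n) L) -> stationary a.
Proof.
  intros Hag Hga Hin.
  assert (Hg : forall n, g n <= g (S n)) by (intro n; specialize (Hag (S n)); specialize (Hga n); lra).
  destruct (nondecreasing_finite_range_stationary L g Hg Hin) as [n0 Hn0].
  assert (Ha : forall m, (n0 < m)%nat -> a m = g n0).
  { intros [|m] Hm; [lia|].
    specialize (Hga m); specialize (Hag (S m)).
    rewrite (Hn0 m) in Hga by lia; rewrite (Hn0 (S m)) in Hag by lia; lra. }
  exists (S n0); intros n Hn; rewrite !Ha by lia; reflexivity.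
Qed.

Lemma sumJ_ext N J J' (g g' : nat -> R) :
  (forall i, (i < N)%nat -> J i = J' i) -> (forall i, (i < N)%nat -> g i = g' i) ->
  sumJ N J g = sumJ N J' g'.
Proof.
  induction N as [|N IH]; intros HJ Hg; simpl; [reflexivity|].
  rewrite IH by (intros; auto with arith); rewrite HJ, Hg by lia; reflexivity.
Qed.

Lemma sumJ_sub N J c (g : nat -> R) :
  sumJ N J (fun i => c - g i) = sumJ N J (fun _ => c) - sumJ N J g.
Proof. induction N; simpl; [lra|]; destruct (J N); lra. Qed.

Lemma sumJ_le_sumN_Rmax N J (g : nat -> R) :
  sumJ N J g <= sumN N (fun i => Rmax (g i) 0).
Proof.
  induction N as [|N IH]; simpl; [lra|].
  pose proof (Rmax_l (g N) 0); pose proof (Rmax_r (g N) 0); destruct (J N); lra.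
Qed.

Lemma sumN_Rmax_sumJ_lt1 N (g : nat -> R) :
  sumN N (fun i => Rmax (1 - g i) 0)
  = sumJ N (fun i => if Rlt_dec (g i) 1 then true else false) (fun i => 1 - g i).
Proof.
  induction N as [|N IH]; simpl; [reflexivity|].
  rewrite IH; destruct (Rlt_dec (g N) 1).
  - rewrite Rmax_left by lra; reflexivity.
  - rewrite Rmax_right by lra; lra.
Qed.

Fixpoint restrictions (N : nat) : list (nat -> bool) :=
  match N with
  | O => [fun _ => false]
  | S n => flat_map (fun K => map (fun b i => if Nat.eqb i n then b else K i) [false; true])
             (restrictions n)
  end.

Lemma restrictions_complete N (J : nat -> bool) :
  exists K, In K (restrictions N) /\ forall i, (i < N)%nat -> J i = K i.
Proof.
  induction N as [|N [K [HK HJK]]]; [exists (fun _ => false); split; [left|lia]; auto|].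
  exists (fun i => if Nat.eqb i N then J N else K i); split.
  - apply in_flat_map; exists K; split; [exact HK|].
    apply in_map_iff; exists (J N); split; [reflexivity|destruct (J N); simpl; auto].
  - intros i Hi; destruct (Nat.eqb_spec i N) as [->|]; [reflexivity|apply HJK; lia].
Qed.

Section BestScore.

Variables (q N : nat) (xs : nat -> Rq q) (d : Rq q -> Rq q -> R).
Variable mu : (nat -> bool) -> Rq q.
Hypothesis mu_argmin : forall J : nat -> bool, is_argmin N d xs J (mu J).

Definition score (J : nat -> bool) (x : Rq q) : R :=
  sumJ N J (fun i => 1 - d x (xs i)).

Definition best (J : nat -> bool) : R := score J (mu J).

Lemma score_le_best J x : score J x <= best J.
Proof.
  unfold best, score; rewrite !sumJ_sub.
  specialize (mu_argmin J x); lra.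
Qed.

Lemma best_restrict J J' :
  (forall i, (i < N)%nat -> J i = J' i) -> best J = best J'.
Proof.
  intro HJ.
  assert (E : forall x, score J x = score J' x) by (intro; apply sumJ_ext; auto).
  pose proof (score_le_best J (mu J')) as A; pose proof (score_le_best J' (mu J)) as B.
  unfold best in *; rewrite E in A; rewrite <- E in B; lra.
Qed.

Lemma best_in_restrictions J : In (best J) (map best (restrictions N)).
Proof.
  destruct (restrictions_complete N J) as [K [HK HJK]].
  rewrite (best_restrict J K HJK); apply in_map, HK.
Qed.

Lemma fobj_Cset x : fobj N d xs x = score (Cset d xs x) x.
Proof. apply sumN_Rmax_sumJ_lt1. Qed.

Lemma fobj_le_best_Cset x : fobj N d xs x <= best (Cset d xs x).
Proof. rewrite fobj_Cset; apply score_le_best. Qed.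

Lemma best_le_fobj J : best J <= fobj N d xs (mu J).
Proof. apply sumJ_le_sumN_Rmax. Qed.

End BestScore.

Theorem proposition2 (q N : nat) (xs : nat -> Rq q)
  (d : Rq q -> Rq q -> R)
  (d_nonneg : forall x y, 0 <= d x y)
  (min_attained : forall J : nat -> bool, exists y, is_argmin N d xs J y)
  (mu : (nat -> bool) -> Rq q)
  (mu_argmin : forall J : nat -> bool, is_argmin N d xs J (mu J))
  (x0 : Rq q) :
  exists n0 : nat, forall n : nat, (n0 <= n)%nat ->
    fobj N d xs (xhat d xs mu x0 n) = fobj N d xs (xhat d xs mu x0 n0).
Proof.
  apply (interleaved_finite_range_stationary (map (best q N xs d mu) (restrictions N))
           (fun n => fobj N d xs (xhat d xs mu x0 n))
           (fun n => best q N xs d mu (Cset d xs (xhat d xs mu x0 n)))).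
  - intro n; apply fobj_le_best_Cset, mu_argmin.
  - intro n; apply best_le_fobj.
  - intro n; apply best_in_restrictions, mu_argmin.
Qed.
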